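(* Suppose the joint distribution of $(Y,X,W_1)$ is known, $\operatorname{cov}(W_1,X)\ne0$, and $\beta_{\text{med}}\ge 0$. Let $\mathcal B_I(\bar r_X)=\mathcal B_I(\bar r_X,0,1)$ and $\bar r_X^{\text{bp}}=\inf\{\bar r_X\ge0: b\in\mathcal B_I(\bar r_X)\text{ for some } b\le 0\}$. Then $$\bar r_X^{\text{bp}}=\left(\frac{R^2_{Y\sim X\bullet W_1}}{\frac{R^2_{X\sim W_1}}{1-R^2_{X\sim W_1}}+R^2_{Y\sim X\bullet W_1}}\right)^{1/2},$$ where $R^2_{Y\sim X\bullet W_1}=\beta_{\text{med}}^2\operatorname{var}(X^{\perp W_1})/\operatorname{var}(Y^{\perp W_1})$.
   Context: Let $(Y,X,W_1,W_2)$ be a random vector with finite second moments, $Y,X\in\mathbb R$, $W_1\in\mathbb R^{d_1}$, $W_2\in\mathbb R$. For random vectors $A,B$ with $\operatorname{var}(B)$ invertible, $A^{\perp B}=A-\operatorname{cov}(A,B)\operatorname{var}(B)^{-1}B$. $\beta_{\text{long}},\gamma_1,\gamma_2$ are the coefficients on $X,W_1,W_2$ in the linear projection of $Y$ on $(1,X,W_1,W_2)$; $\pi_1,\pi_2$ the coefficients on $W_1,W_2$ in the linear projection of $X$ on $(1,W_1,W_2)$; $\beta_{\text{med}}$ the coefficient on $X$ in the linear projection of $Y$ on $(1,X,W_1)$. $\Sigma_{\text{obs}}=\operatorname{var}(W_1)$, $c=\operatorname{cov}(W_1,W_2)$, $R_{W_2\sim W_1}=\sqrt{c'\Sigma_{\text{obs}}^{-1}c/\operatorname{var}(W_2)}$.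 $R^2_{X\sim W_1}$ is the population $R^2$ of the projection of $X$ on $(1,W_1)$. Assumptions: (A1) $\operatorname{var}(Y,X,W_1,W_2)$ positive definite; (A-rx) $\sqrt{\operatorname{var}(\pi_2W_2)}\le\bar r_X\sqrt{\operatorname{var}(\pi_1'W_1)}$; (A-c) $R_{W_2\sim W_1}\in[\underline c,\bar c]$. $\mathcal B_I(\bar r_X,\underline c,\bar c)$ is the set of $b\in\mathbb R$ for which there exists a random vector $(\tilde Y,\tilde X,\tilde W_1,\tilde W_2)$ with $(\tilde Y,\tilde X,\tilde W_1)$ equal in distribution to $(Y,X,W_1)$, $\tilde W_2$ scalar with $\operatorname{var}(\tilde W_2)=1$, satisfying (A1), (A-rx), (A-c), and whose $\beta_{\text{long}}$ equals $b$. *)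

From HB Require Import structures.
From mathcomp Require Import all_boot all_order all_algebra.
From mathcomp Require Import classical_sets reals constructive_ereal ereal.
Set Implicit Arguments. Unset Strict Implicit. Unset Printing Implicit Defensive.
Import Order.TTheory GRing.Theory Num.Theory.
Local Open Scope ring_scope.

(* Everything in the statement depends only on second moments, so a random
   vector is represented by its (population) covariance matrix.
   Observed vector (Y, X, W1) has dimension n.+2 with coordinates
     0 = Y, 1 = X, 2..n+1 = W1 (W1 in R^n).
   Full vector (Y, X, W1, W2) has dimension n.+3, the last coordinate is W2. *)

Section Moments.
Variable R : realType.

Definition posdef k (M : 'M[R]_k) : Prop :=
  M^T = M /\ forall v : 'rV[R]_k, v != 0 -> 0 < (v *m M *m v^T) 0 0.

(* coefficients on the regressors V_(f a) in the linear projection of V_i on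
   (1, V_(f 0), ..., V_(f (m-1))):  var(Z)^{-1} cov(Z, V_i) *)
Definition lpcoef k m (M : 'M[R]_k) (f : 'I_m -> 'I_k) (i : 'I_k) : 'cV[R]_m :=
  invmx (mxsub f f M) *m mxsub f (fun _ : 'I_1 => i) M.

Definition explvar k m (M : 'M[R]_k) (f : 'I_m -> 'I_k) (i : 'I_k) : R :=
  (mxsub (fun _ : 'I_1 => i) f M *m invmx (mxsub f f M)
     *m mxsub f (fun _ : 'I_1 => i) M) 0 0.

Definition resvar k m (M : 'M[R]_k) (f : 'I_m -> 'I_k) (i : 'I_k) : R :=
  M i i - explvar M f i.

Definition rsq k m (M : 'M[R]_k) (f : 'I_m -> 'I_k) (i : 'I_k) : R :=
  explvar M f i / M i i.

Variable n : nat.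

Definition oY : 'I_n.+2 := ord0.
Definition oX : 'I_n.+2 := lift ord0 ord0.
Definition oW (j : 'I_n) : 'I_n.+2 := lift ord0 (lift ord0 j).
Definition oXW (a : 'I_n.+1) : 'I_n.+2 := lift ord0 a.

Definition ext (i : 'I_n.+2) : 'I_n.+3 := widen_ord (leqnSn n.+2) i.
Definition eW2 : 'I_n.+3 := ord_max.
Definition eXWW (a : 'I_n.+2) : 'I_n.+3 := lift ord0 a.
(* regressors (W1, W2): positions 0..n-1 = W1, position n = W2 *)
Definition eWW (a : 'I_n.+1) : 'I_n.+3 := lift ord0 (lift ord0 a).
Definition eW (j : 'I_n) : 'I_n.+3 := ext (oW j).

Definition beta_med (S : 'M[R]_n.+2) : R := lpcoef S oXW oY ord0 0.

Definition beta_long (St : 'M[R]_n.+3) : R := lpcoef St eXWW (ext oY) ord0 0.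

Definition pi1 (St : 'M[R]_n.+3) : 'cV[R]_n :=
  \col_j (lpcoef St eWW (ext oX) (widen_ord (leqnSn n) j) 0).
Definition pi2 (St : 'M[R]_n.+3) : R := lpcoef St eWW (ext oX) ord_max 0.

Definition A_rx (St : 'M[R]_n.+3) (rx : R) : Prop :=
  Num.sqrt (pi2 St ^+ 2 * St eW2 eW2)
  <= rx * Num.sqrt (((pi1 St)^T *m mxsub eW eW St *m pi1 St) 0 0).

Definition R_W2W1 (St : 'M[R]_n.+3) : R :=
  let c := mxsub eW (fun _ : 'I_1 => eW2) St in
  Num.sqrt ((c^T *m invmx (mxsub eW eW St) *m c) 0 0 / St eW2 eW2).

Definition A_c (St : 'M[R]_n.+3) (cl cu : R) : Prop :=
  cl <= R_W2W1 St <= cu.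

Definition B_I (S : 'M[R]_n.+2) (rx cl cu : R) : set R :=
  [set b | exists St : 'M[R]_n.+3,
     (forall i j : 'I_n.+2, St (ext i) (ext j) = S i j) /\
     St eW2 eW2 = 1 /\
     posdef St /\ A_rx St rx /\ A_c St cl cu /\
     beta_long St = b].

(* breakdown point  inf { rx >= 0 : exists b <= 0, b \in B_I(rx, 0, 1) }
   (as an extended real; inf of the empty set is +oo) *)
Definition rx_bp (S : 'M[R]_n.+2) : \bar R :=
  ereal_inf [set r%:E | r in [set r : R | 0 <= r /\
                          exists b : R, b <= 0 /\ B_I S r 0 1 b]].

Definition R2_X_W1 (S : 'M[R]_n.+2) : R := rsq S oW oX.

Definition R2_Y_X_W1 (S : 'M[R]_n.+2) : R :=
  beta_med S ^+ 2 * resvar S oW oX / resvar S oW oY.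

End Moments.

(* Partialling out W1 (Frisch-Waugh-Lovell) reduces everything to the
   residuals X~, Y~, W2~ of X, Y, W2 on W1: pi2 = cov(X~,W2~) / var(W2~),
   pi1'W1 = proj(X) - pi2 proj(W2), and beta_long has the sign of
   cov(X~,Y~) var(W2~) - cov(Y~,W2~) cov(X~,W2~).
   Lower bound: with t = |pi2|, s = R_{W2~W1} and g the standard deviation of
   proj(X), we have var(W2~) = 1 - s^2 and, by the triangle inequality, (A-rx)
   gives t (1 - r s) <= r g. If beta_long <= 0, Cauchy-Schwarz gives
   cov(X~,Y~)^2 <= var(Y~) t^2 (1 - s^2), and (1 - s^2)(1 - r^2) <= (1 - r s)^2
   turns this into (1 - r^2) cov(X~,Y~)^2 <= r^2 g^2 var(Y~), that is,
   r^2 >= cov(X~,Y~)^2 / (g^2 var(Y~) + cov(X~,Y~)^2), the squared threshold.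
   Upper bound: for every r strictly between the threshold and 1, the confounder
   W2 = -(r/g) proj(X) + c2 X~ + c3 Y~ + independent noise, for suitable c2 and
   c3, has R_{W2~W1} = r, satisfies (A-rx) and makes beta_long vanish. *)

From HB Require Import structures.
From mathcomp Require Import all_boot all_order all_algebra.
From mathcomp Require Import classical_sets reals constructive_ereal ereal.
From mathcomp Require Import ring lra.
Set Implicit Arguments. Unset Strict Implicit. Unset Printing Implicit Defensive.
Import Order.TTheory GRing.Theory Num.Theory.
Local Open Scope ring_scope.
Notation "''e_' i" := (delta_mx (0 : 'I_1) i) (at level 8, i at level 2, format "''e_' i").

Section Covariance.
Variables (R : comPzRingType) (k : nat) (M : 'M[R]_k).

(* A row vector u stands for the linear combination u . V of a random vector V
   with covariance matrix M, and 'e_i for the coordinate V_i. *)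
Definition cov (u v : 'rV[R]_k) : R := (u *m M *m v^T) 0 0.

Definition lincomb m (f : 'I_m -> 'I_k) (c : 'I_m -> R) : 'rV[R]_k :=
  \sum_a c a *: 'e_(f a).

Lemma eq_lincomb m (f g : 'I_m -> 'I_k) c d :
  f =1 g -> c =1 d -> lincomb f c = lincomb g d.
Proof. by move=> fg cd; apply: eq_bigr => a _; rewrite fg cd. Qed.

Lemma covDl u u' v : cov (u + u') v = cov u v + cov u' v.
Proof. by rewrite /cov !mulmxDl mxE. Qed.
Lemma covDr u v v' : cov u (v + v') = cov u v + cov u v'.
Proof. by rewrite /cov linearD /= mulmxDr mxE. Qed.
Lemma covZl a u v : cov (a *: u) v = a * cov u v.
Proof. by rewrite /cov -!scalemxAl mxE. Qed.
Lemma covZr a u v : cov u (a *: v) = a * cov u v.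
Proof. by rewrite /cov linearZ /= -scalemxAr mxE. Qed.
Lemma covNl u v : cov (- u) v = - cov u v.
Proof. by rewrite -scaleN1r covZl mulN1r. Qed.
Lemma covNr u v : cov u (- v) = - cov u v.
Proof. by rewrite -scaleN1r covZr mulN1r. Qed.
Lemma covBl u u' v : cov (u - u') v = cov u v - cov u' v.
Proof. by rewrite covDl covNl. Qed.
Lemma covBr u v v' : cov u (v - v') = cov u v - cov u v'.
Proof. by rewrite covDr covNr. Qed.
Lemma cov0l v : cov 0 v = 0.
Proof. by rewrite /cov !mul0mx mxE. Qed.
Lemma cov0r v : cov v 0 = 0.
Proof. by rewrite /cov trmx0 mulmx0 mxE. Qed.

Lemma cov_delta i j : cov 'e_i 'e_j = M i j.
Proof. by rewrite /cov trmx_delta -(rowE i M) -(colE j) !mxE. Qed.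

Lemma cov_lincombl m (f : 'I_m -> 'I_k) c v :
  cov (lincomb f c) v = \sum_a c a * cov 'e_(f a) v.
Proof.
rewrite /lincomb; elim/big_rec2: _ => [|a y u _ <-]; first exact: cov0l.
by rewrite covDl covZl.
Qed.

Lemma cov_lincombr m (f : 'I_m -> 'I_k) c v :
  cov v (lincomb f c) = \sum_a c a * cov v 'e_(f a).
Proof.
rewrite /lincomb; elim/big_rec2: _ => [|a y u _ <-]; first exact: cov0r.
by rewrite covDr covZr.
Qed.

Lemma cov_lincomb_eq0 m (f : 'I_m -> 'I_k) c v :
  (forall a, cov v 'e_(f a) = 0) -> cov v (lincomb f c) = 0.
Proof. by move=> h; rewrite cov_lincombr big1 // => a _; rewrite h mulr0. Qed.

Lemma cov_mxsub m (f : 'I_m -> 'I_k) (x : 'rV_m) :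
  (x *m mxsub f f M *m x^T) 0 0 = cov (lincomb f (x 0)) (lincomb f (x 0)).
Proof.
rewrite cov_lincombr mxE; apply: eq_bigr => b _.
rewrite cov_lincombl mxE big_distrl /= mulrC big_distrl /=; apply: eq_bigr => a _.
by rewrite !mxE cov_delta; ring.
Qed.

Lemma lincomb_coord m (f : 'I_m -> 'I_k) c j :
  lincomb f c 0 j = \sum_a c a * (f a == j)%:R.
Proof. by rewrite summxE; apply: eq_bigr => a _; rewrite !mxE eqxx eq_sym. Qed.

Lemma lincomb_coord_inj m (f : 'I_m -> 'I_k) c a :
  injective f -> lincomb f c 0 (f a) = c a.
Proof.
move=> f_inj; rewrite lincomb_coord (bigD1 a) //= eqxx mulr1 big1 ?addr0 //.
by move=> b ba; rewrite (inj_eq f_inj) (negbTE ba) mulr0.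
Qed.

Lemma lincomb_coord_out m (f : 'I_m -> 'I_k) c j :
  (forall a, f a != j) -> lincomb f c 0 j = 0.
Proof.
by move=> h; rewrite lincomb_coord big1 // => a _; rewrite (negbTE (h a)) mulr0.
Qed.

Lemma lincombZ m (f : 'I_m -> 'I_k) (a : R) c :
  lincomb f (fun b => a * c b) = a *: lincomb f c.
Proof. by rewrite /lincomb scaler_sumr; apply: eq_bigr => b _; rewrite scalerA. Qed.

Lemma lincomb_recl m (f : 'I_m.+1 -> 'I_k) c :
  lincomb f c = c ord0 *: 'e_(f ord0) + lincomb (f \o lift ord0) (c \o lift ord0).
Proof. exact: big_ord_recl. Qed.

Lemma lincomb_recr m (f : 'I_m.+1 -> 'I_k) c :
  lincomb f c = lincomb (f \o widen_ord (leqnSn m)) (c \o widen_ord (leqnSn m))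
                + c ord_max *: 'e_(f ord_max).
Proof. exact: big_ord_recr. Qed.

End Covariance.

Lemma delta_coord (R : pzRingType) k (i j : 'I_k) : ('e_i : 'rV[R]_k) 0 j = (i == j)%:R.
Proof. by rewrite mxE eqxx eq_sym. Qed.

Lemma scaleB_coord (R : pzRingType) k (a b : R) (u w : 'rV[R]_k) j :
  (a *: u - b *: w) 0 j = a * u 0 j - b * w 0 j.
Proof. by rewrite !mxE. Qed.

Section PosDef.
Variables (R : realType) (k : nat) (M : 'M[R]_k).
Hypothesis M_pd : posdef M.

Lemma covC u v : cov M u v = cov M v u.
Proof.
case: M_pd => M_sym _; rewrite /cov.
have -> : (v *m M *m u^T) 0 0 = (v *m M *m u^T)^T 0 0 by rewrite [in RHS]mxE.
by rewrite !trmx_mul trmxK M_sym mulmxA.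
Qed.

Lemma posdef_entryC i j : M i j = M j i.
Proof. by rewrite -!cov_delta covC. Qed.

Lemma cov_ge0 v : 0 <= cov M v v.
Proof.
have [->|v_neq0] := eqVneq v 0; first by rewrite cov0l.
by case: M_pd => _ /(_ v v_neq0) /ltW.
Qed.

Lemma cov_eq0 v : cov M v v = 0 -> v = 0.
Proof.
move=> v0; apply/eqP; apply: contraT => v_neq0.
by case: M_pd => _ /(_ v v_neq0); rewrite -/(cov M v v) v0 ltxx.
Qed.

Lemma cov_gt0 v : v != 0 -> 0 < cov M v v.
Proof. by case: M_pd => _; apply. Qed.

Lemma cauchy_schwarz u v : cov M u v ^+ 2 <= cov M u u * cov M v v.
Proof.
have [uu0|uu_neq0] := eqVneq (cov M u u) 0.
  by rewrite (cov_eq0 uu0) !cov0l expr0n mul0r.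
have uu_gt0 : 0 < cov M u u by rewrite lt_def uu_neq0 cov_ge0.
have := cov_ge0 (cov M u u *: v - cov M u v *: u).
rewrite !covBl !covBr !covZl !covZr (covC v u); nra.
Qed.

Lemma cauchy_schwarz_lt (u w : 'rV_k) j : u 0 j = 0 -> w 0 j != 0 -> 0 < cov M u u ->
  cov M u w ^+ 2 < cov M u u * cov M w w.
Proof.
move=> u_j w_j uu_gt0; set v := cov M u w *: u - cov M u u *: w.
have v_neq0 : v != 0.
  apply/eqP => /(congr1 (fun x : 'rV_k => x 0 j)) /eqP.
  by rewrite scaleB_coord u_j mxE mulr0 sub0r oppr_eq0 mulf_eq0 (gt_eqF uu_gt0) (negbTE w_j).
have := cov_gt0 v_neq0; rewrite !covBl !covBr !covZl !covZr (covC w u); nra.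
Qed.

Lemma sd_triangle u v :
  Num.sqrt (cov M (u + v) (u + v)) <= Num.sqrt (cov M u u) + Num.sqrt (cov M v v).
Proof.
rewrite -(ger0_norm (addr_ge0 (sqrtr_ge0 _) (sqrtr_ge0 _))) -sqrtr_sqr.
have uv_le : cov M u v <= Num.sqrt (cov M u u * cov M v v).
  rewrite (le_trans (ler_norm _)) // -sqrtr_sqr; exact/ler_wsqrtr/cauchy_schwarz.
apply: ler_wsqrtr; rewrite sqrrD !sqr_sqrtr ?cov_ge0 // -sqrtrM ?cov_ge0 //.
rewrite !covDl !covDr (covC v u); lra.
Qed.

Lemma mxsub_unitmx m (f : 'I_m -> 'I_k) : injective f -> mxsub f f M \in unitmx.
Proof.
move=> f_inj; rewrite unitmxE unitfE; apply/negP => /det0P [x x_neq0 x0].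
have := cov_mxsub M f x; rewrite x0 mul0mx mxE => /esym /cov_eq0 comb0.
move/eqP: x_neq0; apply; apply/rowP => a.
by rewrite mxE -(lincomb_coord_inj (x 0) a f_inj) comb0 mxE.
Qed.

Lemma lpcoef_normal_eq m (f : 'I_m -> 'I_k) i (x : 'cV_m) :
  mxsub f f M *m x = mxsub f (fun _ : 'I_1 => i) M <->
  (forall a, cov M ('e_i - lincomb f (fun b => x b 0)) 'e_(f a) = 0).
Proof.
have cov_res a : cov M ('e_i - lincomb f (fun b => x b 0)) 'e_(f a)
               = M (f a) i - (mxsub f f M *m x) a 0.
  rewrite covBl cov_delta cov_lincombl posdef_entryC mxE; congr (_ - _).
  by apply: eq_bigr => b _; rewrite cov_delta !mxE posdef_entryC mulrC.
split=> [eq_x a | h]; first by rewrite cov_res eq_x !mxE subrr.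
apply/matrixP => a z; rewrite (ord1 z) [RHS]mxE; apply/eqP.
by rewrite eq_sym -subr_eq0 -cov_res h.
Qed.

Definition lproj m (f : 'I_m -> 'I_k) i := lincomb f (fun b => lpcoef M f i b 0).

Lemma lproj_orth m (f : 'I_m -> 'I_k) i a : injective f ->
  cov M ('e_i - lproj f i) 'e_(f a) = 0.
Proof.
by move=> f_inj; move: a; apply/lpcoef_normal_eq; rewrite mulKVmx // mxsub_unitmx.
Qed.

Lemma lproj_unique m (f : 'I_m -> 'I_k) i c : injective f ->
  (forall a, cov M ('e_i - lincomb f c) 'e_(f a) = 0) -> lproj f i = lincomb f c.
Proof.
move=> f_inj h.
have col_c : (fun b => (\col_a c a) b 0) =1 c by move=> b; rewrite mxE.
have eq_c : mxsub f f M *m \col_a c a = mxsub f (fun _ : 'I_1 => i) M.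
  by apply/lpcoef_normal_eq => a; rewrite -(h a) (eq_lincomb (frefl f) col_c).
by rewrite /lproj /lpcoef -eq_c mulKmx ?mxsub_unitmx //; apply: eq_lincomb.
Qed.

Lemma lproj_orth_lincomb m (f : 'I_m -> 'I_k) i c : injective f ->
  cov M ('e_i - lproj f i) (lincomb f c) = 0.
Proof. by move=> f_inj; apply: cov_lincomb_eq0 => a; apply: lproj_orth. Qed.

Lemma resid_orth_lproj m (f : 'I_m -> 'I_k) i : injective f ->
  cov M ('e_i - lproj f i) (lproj f i) = 0.
Proof. exact: lproj_orth_lincomb. Qed.

Lemma explvar_lproj m (f : 'I_m -> 'I_k) i : explvar M f i = cov M (lproj f i) 'e_i.
Proof.
rewrite /explvar -mulmxA -/(lpcoef M f i) mxE cov_lincombl.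
by apply: eq_bigr => a _; rewrite cov_delta !mxE posdef_entryC mulrC.
Qed.

Lemma explvarE m (f : 'I_m -> 'I_k) i : injective f ->
  explvar M f i = cov M (lproj f i) (lproj f i).
Proof.
move=> f_inj.
rewrite explvar_lproj -[in LHS](subrK (lproj f i) 'e_i) covDr covC.
by rewrite resid_orth_lproj // add0r.
Qed.

Lemma resvarE m (f : 'I_m -> 'I_k) i : injective f ->
  resvar M f i = cov M ('e_i - lproj f i) ('e_i - lproj f i).
Proof.
move=> f_inj; rewrite /resvar explvar_lproj -cov_delta [RHS]covBr resid_orth_lproj //.
by rewrite subr0 covBl.
Qed.

Lemma lproj_resid_coord m (f : 'I_m -> 'I_k) i : (forall a, f a != i) ->
  ('e_i - lproj f i) 0 i = 1.
Proof. by move=> f_i; rewrite !mxE !eqxx /= lincomb_coord_out // subr0. Qed.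

Lemma lproj_resid_gt0 m (f : 'I_m -> 'I_k) i : (forall a, f a != i) ->
  0 < cov M ('e_i - lproj f i) ('e_i - lproj f i).
Proof.
move=> f_i; apply: cov_gt0; apply/eqP => /(congr1 (fun v : 'rV_k => v 0 i)) /eqP.
by rewrite lproj_resid_coord // mxE oner_eq0.
Qed.

Lemma rsq_ge0_le1 m (f : 'I_m -> 'I_k) i : injective f -> 0 <= rsq M f i <= 1.
Proof.
move=> f_inj; have ii_gt0 : 0 < M i i.
  rewrite -cov_delta cov_gt0 //; apply/eqP => /rowP /(_ i) /eqP.
  by rewrite !mxE !eqxx oner_eq0.
have ii_eq : M i i = resvar M f i + explvar M f i by rewrite /resvar subrK.
rewrite /rsq divr_ge0 ?explvarE ?cov_ge0 ?(ltW ii_gt0) //=.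
by rewrite ler_pdivrMr // mul1r ii_eq resvarE // explvarE // lerDr cov_ge0.
Qed.

End PosDef.

Section Observed.
Variables (R : realType) (n : nat) (S : 'M[R]_n.+2).
Hypothesis S_pd : posdef S.

Lemma oW_inj : injective (@oW n).
Proof. by move=> a b /lift_inj /lift_inj. Qed.

Lemma oW_neq_oX j : oW j != oX n.
Proof. by apply/eqP => /lift_inj. Qed.

Definition projX := lproj S (@oW n) (oX n).
Definition projY := lproj S (@oW n) (oY n).
Definition resX := 'e_(oX n) - projX.
Definition resY := 'e_(oY n) - projY.

Definition vX := cov S resX resX.
Definition vY := cov S resY resY.
Definition cXY := cov S resX resY.
Definition vPX := cov S projX projX.

Lemma resX_orthW j : cov S resX 'e_(oW j) = 0.
Proof. exact: lproj_orth oW_inj. Qed.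
Lemma resY_orthW j : cov S resY 'e_(oW j) = 0.
Proof. exact: lproj_orth oW_inj. Qed.
Lemma projX_resX : cov S projX resX = 0.
Proof. by rewrite covC //; apply: lproj_orth_lincomb oW_inj. Qed.
Lemma projY_resX : cov S projY resX = 0.
Proof. by rewrite covC //; apply: lproj_orth_lincomb oW_inj. Qed.
Lemma projX_resY : cov S projX resY = 0.
Proof. by rewrite covC //; apply: lproj_orth_lincomb oW_inj. Qed.

Lemma cov_eX_resX : cov S 'e_(oX n) resX = vX.
Proof. by rewrite -[in LHS](subrK projX 'e_(oX n)) covDl projX_resX addr0. Qed.
Lemma cov_eY_resX : cov S 'e_(oY n) resX = cXY.
Proof.
by rewrite -[in LHS](subrK projY 'e_(oY n)) covDl projY_resX addr0 covC.
Qed.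

Lemma resvarX : resvar S (@oW n) (oX n) = vX.
Proof. exact: resvarE oW_inj. Qed.
Lemma resvarY : resvar S (@oW n) (oY n) = vY.
Proof. exact: resvarE oW_inj. Qed.

Lemma rsqX : rsq S (@oW n) (oX n) = vPX / (vX + vPX).
Proof.
by rewrite /rsq -resvarX /resvar explvarE //; [rewrite subrK | exact: oW_inj].
Qed.

Lemma vX_gt0 : 0 < vX.
Proof. exact/lproj_resid_gt0/oW_neq_oX. Qed.
Lemma vY_gt0 : 0 < vY.
Proof. exact: lproj_resid_gt0. Qed.

Lemma vPX_gt0 : mxsub (@oW n) (fun _ : 'I_1 => oX n) S != 0 -> 0 < vPX.
Proof.
move=> covWX_neq0; rewrite lt_def cov_ge0 // andbT.
apply: contra_neq covWX_neq0 => /(cov_eq0 S_pd) projX0.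
apply/matrixP => j z; rewrite !mxE -cov_delta covC // -(subrK projX 'e_(oX n)).
by rewrite covDl -/resX resX_orthW projX0 cov0l addr0.
Qed.

Lemma cXY_sq_lt : cXY ^+ 2 < vX * vY.
Proof.
apply: (cauchy_schwarz_lt S_pd (j := oY n)) vX_gt0.
  by rewrite !mxE lincomb_coord_out // subr0.
by rewrite lproj_resid_coord ?oner_eq0.
Qed.

Lemma beta_medE : beta_med S = cXY / vX.
Proof.
have oXW_inj : injective (@oXW n) by move=> a b /lift_inj.
set res := 'e_(oY n) - lproj S (@oXW n) (oY n).
have res_orth a : cov S res 'e_(oXW a) = 0 by apply: lproj_orth.
have res_resX : cov S res resX = 0.
  rewrite covBr (res_orth ord0) sub0r; apply/eqP; rewrite oppr_eq0; apply/eqP.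
  by apply: cov_lincomb_eq0 => j; apply: (res_orth (lift ord0 j)).
move: res_resX; rewrite /res /lproj lincomb_recl /= covBl covDl covZl.
rewrite (covC _ (lincomb _ _)) // (@cov_lincomb_eq0 _ _ _ _ (@oW n)); last exact: resX_orthW.
rewrite -[oXW _]/(oX n) cov_eX_resX cov_eY_resX addr0 => /eqP.
rewrite subr_eq0 => /eqP ->.
by rewrite mulfK ?lt0r_neq0 ?vX_gt0.
Qed.

End Observed.

Section Lift.
Variables (R : comPzRingType) (n : nat).

Definition liftv (v : 'rV[R]_n.+2) : 'rV[R]_n.+3 :=
  v *m \matrix_(i, j) (ext i == j)%:R.

Lemma ext_inj : injective (@ext n).
Proof. by move=> a b /(congr1 val) /= /val_inj. Qed.
Lemma ext_neq_eW2 i : @ext n i != eW2 n.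
Proof. by rewrite -(inj_eq val_inj) /= neq_ltn ltn_ord. Qed.
Lemma ext_lift i : @ext n i = lift (eW2 n) i.
Proof. by apply: val_inj; rewrite /= /bump ltnNge -ltnS ltn_ord. Qed.

Lemma eW_neq_eW2 j : @eW n j != eW2 n.
Proof. exact: ext_neq_eW2. Qed.

Lemma eW_inj : injective (@eW n).
Proof. by move=> a b /ext_inj /oW_inj. Qed.

Lemma eWW_inj : injective (@eWW n).
Proof. by move=> a b /lift_inj /lift_inj. Qed.
Lemma eXWW_inj : injective (@eXWW n).
Proof. by move=> a b /lift_inj. Qed.

Lemma eWW_widen j : eWW (widen_ord (leqnSn n) j) = eW j.
Proof. exact: val_inj. Qed.
Lemma eWW_max : eWW ord_max = eW2 n.
Proof. exact: val_inj. Qed.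
Lemma eXWW0 : eXWW ord0 = ext (oX n).
Proof. exact: val_inj. Qed.
Lemma eXWW_widen j : eXWW (lift ord0 (widen_ord (leqnSn n) j)) = eW j.
Proof. exact: val_inj. Qed.
Lemma eXWW_max : eXWW (lift ord0 ord_max) = eW2 n.
Proof. exact: val_inj. Qed.

Lemma liftv_delta i : liftv 'e_i = 'e_(ext i).
Proof. by apply/rowP => j; rewrite /liftv -rowE !mxE eqxx eq_sym. Qed.

Lemma liftvD u v : liftv (u + v) = liftv u + liftv v.
Proof. exact: mulmxDl. Qed.

Lemma liftv_lincomb m (f : 'I_m -> 'I_n.+2) c : liftv (lincomb f c) = lincomb (@ext n \o f) c.
Proof.
rewrite /liftv /lincomb mulmx_suml; apply: eq_bigr => a _.
by rewrite -scalemxAl -/(liftv _) liftv_delta.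
Qed.

Lemma liftv_coord_eW2 v : liftv v 0 (eW2 n) = 0.
Proof.
by rewrite mxE big1 // => i _; rewrite mxE (negbTE (ext_neq_eW2 i)) mulr0.
Qed.

Lemma row_lincomb k (v : 'rV[R]_k) : v = lincomb id (v 0).
Proof. exact: row_sum_delta. Qed.

Lemma cov_liftv (S : 'M[R]_n.+2) (St : 'M[R]_n.+3) :
  (forall i j, St (ext i) (ext j) = S i j) ->
  forall u v, cov St (liftv u) (liftv v) = cov S u v.
Proof.
move=> St_ext u v; rewrite [u in RHS]row_lincomb [v in RHS]row_lincomb.
rewrite [u in LHS]row_lincomb [v in LHS]row_lincomb !liftv_lincomb !cov_lincombl.
apply: eq_bigr => a _; rewrite !cov_lincombr; congr (_ * _); apply: eq_bigr => b _.
by rewrite !cov_delta St_ext.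
Qed.

End Lift.

Section BreakdownArith.
Variable R : realType.

(* Read t = |pi2|, s = R_{W2~W1} and g = sd(proj(X)). *)
Lemma breakdown_lower_arith (vY cXY g s t r vW2 cXW2 cYW2 : R) :
  0 <= cXY -> 0 <= g -> 0 <= s -> 0 <= t -> 0 <= r ->
  vW2 = 1 - s ^+ 2 -> 0 < vW2 -> cXW2 ^+ 2 = t ^+ 2 * vW2 ^+ 2 ->
  t <= r * (g + t * s) -> cXY * vW2 <= cYW2 * cXW2 -> cYW2 ^+ 2 <= vY * vW2 ->
  cXY ^+ 2 <= r ^+ 2 * (g ^+ 2 * vY + cXY ^+ 2).
Proof.
move=> cXY_ge0 g_ge0 s_ge0 t_ge0 r_ge0 vW2_eq vW2_gt0 cXW2_sq t_le fwl_le cs.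
have vY_ge0 : 0 <= vY by nra.
have cXY_sq : cXY ^+ 2 <= vY * t ^+ 2 * vW2.
  have fwl_ge0 : 0 <= cXY * vW2 := mulr_ge0 cXY_ge0 (ltW vW2_gt0).
  have sq_le : (cXY * vW2) ^+ 2 <= (cYW2 * cXW2) ^+ 2.
    by apply: lerXn2r; rewrite ?nnegrE //; apply: le_trans fwl_ge0 fwl_le.
  rewrite -(ler_pM2r (exprn_gt0 2 vW2_gt0)); apply: (le_trans (y := (cYW2 * cXW2) ^+ 2)).
    by rewrite -exprMn.
  rewrite exprMn cXW2_sq (_ : _ * vW2 * _ = vY * vW2 * (t ^+ 2 * vW2 ^+ 2)); last by ring.
  by apply: ler_wpM2r cs; rewrite mulr_ge0 ?sqr_ge0.
have gvY_ge0 : 0 <= g ^+ 2 * vY by rewrite mulr_ge0 ?sqr_ge0.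
have [r_ge1 | r_lt1] := lerP 1 r.
  by have := exprn_ege1 2 r_ge1; have := sqr_ge0 cXY; nra.
have s_le1 : s <= 1 by nra.
have t_rs : t * (1 - r * s) <= r * g by nra.
have rs_le : (1 - s ^+ 2) * (1 - r ^+ 2) <= (1 - r * s) ^+ 2.
  by have := sqr_ge0 (r - s); nra.
have t_sq : t ^+ 2 * vW2 * (1 - r ^+ 2) <= r ^+ 2 * g ^+ 2.
  rewrite vW2_eq -mulrA (le_trans (ler_wpM2l (sqr_ge0 t) rs_le)) // -!exprMn.
  by apply: lerXn2r; rewrite ?nnegrE ?mulr_ge0 //; nra.
have r2_ge0 : 0 <= 1 - r ^+ 2 by nra.
by have := ler_wpM2l vY_ge0 t_sq; have := ler_wpM2r r2_ge0 cXY_sq; nra.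
Qed.

(* a is the value to be given to cov(X~, W2~). *)
Lemma confounder_cov_choice (vX vY cXY G r : R) :
  0 < vX -> cXY ^+ 2 < vX * vY -> 0 < G -> 0 < r < 1 ->
  (1 - r ^+ 2) * cXY ^+ 2 < r ^+ 2 * G * vY ->
  exists a, [/\ 0 < a, a <= r * Num.sqrt G, (1 - r ^+ 2) * cXY ^+ 2 < vY * a ^+ 2
              & a ^+ 2 < (1 - r ^+ 2) * vX].
Proof.
move=> vX_gt0 cs_lt G_gt0 /andP [r_gt0 r_lt1] r_large.
have vY_gt0 : 0 < vY by nra.
set V := 1 - r ^+ 2; set L := V * cXY ^+ 2 / vY.
have V_gt0 : 0 < V by rewrite subr_gt0; nra.
have L_lt_rG : L < r ^+ 2 * G by rewrite ltr_pdivrMr //; exact: r_large.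
have L_lt_VvX : L < V * vX by rewrite ltr_pdivrMr // -mulrA ltr_pM2l.
set A := Num.min (r ^+ 2 * G) ((L + V * vX) / 2).
have L_lt_A : L < A by rewrite lt_min L_lt_rG /=; lra.
have A_lt : A < V * vX by rewrite gt_min; apply/orP; right; lra.
have A_le : A <= r ^+ 2 * G by rewrite ge_min lexx.
have L_ge0 : 0 <= L := divr_ge0 (mulr_ge0 (ltW V_gt0) (sqr_ge0 _)) (ltW vY_gt0).
have A_gt0 : 0 < A by apply: le_lt_trans L_lt_A.
exists (Num.sqrt A); rewrite sqr_sqrtr ?(ltW A_gt0) // sqrtr_gt0; split=> //.
- by rewrite -(ger0_norm (ltW r_gt0)) -sqrtr_sqr -sqrtrM ?sqr_ge0 // ler_wsqrtr.
- by move: L_lt_A; rewrite ltr_pdivrMr // [A * _]mulrC.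
Qed.

Lemma confounder_coefs (vX vY cXY G r : R) :
  0 < vX -> cXY ^+ 2 < vX * vY -> 0 < G -> 0 < r < 1 ->
  (1 - r ^+ 2) * cXY ^+ 2 < r ^+ 2 * G * vY ->
  exists c2 c3 v, [/\ 0 < v,
    r ^+ 2 + (c2 ^+ 2 * vX + 2 * c2 * c3 * cXY + c3 ^+ 2 * vY) + v = 1,
    cXY * (1 - r ^+ 2) = (c2 * cXY + c3 * vY) * (c2 * vX + c3 * cXY),
    0 <= c2 * vX + c3 * cXY & c2 * vX + c3 * cXY <= r * Num.sqrt G].
Proof.
move=> vX_gt0 cs_lt G_gt0 r01 r_large.
have [a [a_gt0 a_le a_large a_small]] := confounder_cov_choice vX_gt0 cs_lt G_gt0 r01 r_large.
set V := 1 - r ^+ 2; set D := V - a ^+ 2 / vX; set h := vY - cXY ^+ 2 / vX.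
have D_gt0 : 0 < D by rewrite subr_gt0 ltr_pdivrMr.
have h_gt0 : 0 < h by rewrite subr_gt0 ltr_pdivrMr // mulrC.
set c3 := cXY * D / (h * a); set c2 := a / vX - c3 * cXY / vX.
have vX_neq0 := lt0r_neq0 vX_gt0; have h_neq0 := lt0r_neq0 h_gt0.
have a_neq0 := lt0r_neq0 a_gt0.
have sxe : c2 * vX + c3 * cXY = a by rewrite /c2; field; rewrite ?a_neq0 ?h_neq0 ?vX_neq0.
have sye : c2 * cXY + c3 * vY = a * cXY / vX + c3 * h.
  by rewrite /c2 /h; field; rewrite ?a_neq0 ?h_neq0 ?vX_neq0.
exists c2, c3, (D - c3 ^+ 2 * h); rewrite sxe sye; split.
- have -> : c3 ^+ 2 * h = D * (cXY ^+ 2 * D / (h * a ^+ 2)).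
    by rewrite /c3; field; rewrite ?a_neq0 ?h_neq0 ?vX_neq0.
  rewrite subr_gt0 -[X in _ < X]mulr1 ltr_pM2l // ltr_pdivrMr ?mulr_gt0 ?exprn_gt0 //.
  rewrite mul1r -subr_gt0 (_ : _ - _ = vY * a ^+ 2 - V * cXY ^+ 2) ?subr_gt0 //.
  by rewrite /h /D; field; rewrite ?a_neq0 ?h_neq0 ?vX_neq0.
- by rewrite /c2 /D /h /V; field; rewrite ?a_neq0 ?h_neq0 ?vX_neq0.
- by rewrite /c3 /D /V; field; rewrite ?a_neq0 ?h_neq0 ?vX_neq0.
- exact: ltW.
- exact: a_le.
Qed.

End BreakdownArith.

Section Extended.
Variables (R : realType) (n : nat) (S : 'M[R]_n.+2) (St : 'M[R]_n.+3).
Hypotheses (S_pd : posdef S) (St_pd : posdef St).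
Hypothesis St_ext : forall i j, St (ext i) (ext j) = S i j.

Definition resXt := liftv (resX S).
Definition resYt := liftv (resY S).
Definition projXt := liftv (projX S).
Definition projYt := liftv (projY S).
Definition projW2 := lproj St (@eW n) (eW2 n).
Definition resW2 := 'e_(eW2 n) - projW2.

Definition vW2 := cov St resW2 resW2.
Definition cXW2 := cov St resXt resW2.
Definition cYW2 := cov St resYt resW2.
Definition vPW2 := cov St projW2 projW2.

Lemma resXt_orthW j : cov St resXt 'e_(eW j) = 0.
Proof. by rewrite -liftv_delta (cov_liftv St_ext) resX_orthW. Qed.
Lemma resYt_orthW j : cov St resYt 'e_(eW j) = 0.
Proof. by rewrite -liftv_delta (cov_liftv St_ext) resY_orthW. Qed.
Lemma resW2_orthW j : cov St resW2 'e_(eW j) = 0.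
Proof. exact/lproj_orth/eW_inj. Qed.

Lemma projXt_lincomb : projXt = lincomb (@eW n) (fun j => lpcoef S (@oW n) (oX n) j 0).
Proof. exact: liftv_lincomb. Qed.
Lemma projYt_lincomb : projYt = lincomb (@eW n) (fun j => lpcoef S (@oW n) (oY n) j 0).
Proof. exact: liftv_lincomb. Qed.

Lemma delta_eXt : 'e_(ext (oX n)) = resXt + projXt.
Proof. by rewrite -liftv_delta -liftvD subrK. Qed.
Lemma delta_eYt : 'e_(ext (oY n)) = resYt + projYt.
Proof. by rewrite -liftv_delta -liftvD subrK. Qed.
Lemma delta_eW2 : 'e_(eW2 n) = resW2 + projW2.
Proof. by rewrite subrK. Qed.

Lemma cov_span_resW2 c : cov St (lincomb (@eW n) c) resW2 = 0.
Proof. by rewrite covC //; apply: cov_lincomb_eq0; apply: resW2_orthW. Qed.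
Lemma cov_span_resXt c : cov St (lincomb (@eW n) c) resXt = 0.
Proof. by rewrite covC //; apply: cov_lincomb_eq0; apply: resXt_orthW. Qed.
Lemma projW2_resW2 : cov St projW2 resW2 = 0.
Proof. exact: cov_span_resW2. Qed.

Lemma projXt_resXt : cov St projXt resXt = 0.
Proof. by rewrite projXt_lincomb cov_span_resXt. Qed.
Lemma projYt_resXt : cov St projYt resXt = 0.
Proof. by rewrite projYt_lincomb cov_span_resXt. Qed.
Lemma projW2_resXt : cov St projW2 resXt = 0.
Proof. exact: cov_span_resXt. Qed.
Lemma projXt_resYt : cov St projXt resYt = 0.
Proof.
by rewrite projXt_lincomb covC //; apply: cov_lincomb_eq0; apply: resYt_orthW.
Qed.
Lemma projXt_resW2 : cov St projXt resW2 = 0.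
Proof. by rewrite projXt_lincomb cov_span_resW2. Qed.
Lemma projYt_resW2 : cov St projYt resW2 = 0.
Proof. by rewrite projYt_lincomb cov_span_resW2. Qed.

Lemma cov_eXt_resXt : cov St 'e_(ext (oX n)) resXt = vX S.
Proof. by rewrite delta_eXt covDl projXt_resXt addr0 (cov_liftv St_ext). Qed.
Lemma cov_eYt_resXt : cov St 'e_(ext (oY n)) resXt = cXY S.
Proof. by rewrite delta_eYt covDl projYt_resXt addr0 (cov_liftv St_ext) covC. Qed.
Lemma cov_eW2_resXt : cov St 'e_(eW2 n) resXt = cXW2.
Proof. by rewrite delta_eW2 covDl projW2_resXt addr0 covC. Qed.
Lemma cov_eXt_resW2 : cov St 'e_(ext (oX n)) resW2 = cXW2.
Proof. by rewrite delta_eXt covDl projXt_resW2 addr0. Qed.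
Lemma cov_eYt_resW2 : cov St 'e_(ext (oY n)) resW2 = cYW2.
Proof. by rewrite delta_eYt covDl projYt_resW2 addr0. Qed.
Lemma cov_eW2_resW2 : cov St 'e_(eW2 n) resW2 = vW2.
Proof. by rewrite delta_eW2 covDl projW2_resW2 addr0. Qed.

Lemma vW2_gt0 : 0 < vW2.
Proof. exact/lproj_resid_gt0/eW_neq_eW2. Qed.

Lemma vW2_eq : St (eW2 n) (eW2 n) = 1 -> vW2 = 1 - vPW2.
Proof.
move=> St_W2; rewrite /vW2 -(resvarE St_pd _ (@eW_inj n)) /resvar.
by rewrite (explvarE St_pd _ (@eW_inj n)) St_W2.
Qed.

Lemma A_c01 : A_c St 0 1.
Proof.
have /andP [rsq_ge0 rsq_le1] := rsq_ge0_le1 St_pd (eW2 n) (@eW_inj n).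
rewrite /A_c; have -> : R_W2W1 St = Num.sqrt (rsq St (@eW n) (eW2 n)).
  by rewrite /R_W2W1 /rsq /explvar trmx_mxsub; case: St_pd => ->.
by rewrite sqrtr_ge0 -sqrtr1 ler_wsqrtr.
Qed.

Definition piW := lincomb (@eW n) (fun j => pi1 St j 0).
Definition resXlong := 'e_(ext (oX n)) - lproj St (@eWW n) (ext (oX n)).

Lemma lproj_XW1W2 : lproj St (@eWW n) (ext (oX n)) = piW + pi2 St *: 'e_(eW2 n).
Proof.
rewrite /lproj lincomb_recr; congr (_ + _ *: 'e__); last exact: eWW_max.
by apply: eq_lincomb => j; rewrite /= ?mxE // eWW_widen.
Qed.

Lemma resXlong_orthW j : cov St resXlong 'e_(eW j) = 0.
Proof. by rewrite -eWW_widen; apply: lproj_orth (@eWW_inj n). Qed.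
Lemma resXlong_resW2 : cov St resXlong resW2 = 0.
Proof.
rewrite covBr (cov_lincomb_eq0 _ resXlong_orthW) subr0 -eWW_max.
exact: lproj_orth (@eWW_inj n).
Qed.

Lemma pi2_eq : pi2 St * vW2 = cXW2.
Proof.
have := resXlong_resW2; rewrite /resXlong lproj_XW1W2 covBl covDl covZl.
rewrite cov_eXt_resW2 cov_span_resW2 cov_eW2_resW2 add0r.
by move/eqP; rewrite subr_eq0 => /eqP.
Qed.

Lemma piW_eq : piW = projXt - pi2 St *: projW2.
Proof.
set z := projXt - pi2 St *: projW2 - piW.
have z_orth j : cov St z 'e_(eW j) = 0.
  have := resXlong_orthW j.
  rewrite /resXlong lproj_XW1W2 delta_eXt delta_eW2 /z !covBl !covDl !covZl covDl.
  by rewrite resXt_orthW resW2_orthW => <-; ring.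
have : cov St z z = 0.
  rewrite {2}/z !covBr covZr projXt_lincomb /projW2 /lproj /piW.
  by rewrite !(cov_lincomb_eq0 _ z_orth); ring.
by move/(cov_eq0 St_pd)/eqP; rewrite subr_eq0 => /eqP.
Qed.

Lemma A_rxE r : St (eW2 n) (eW2 n) = 1 ->
  A_rx St r <->
  `|pi2 St| <= r * Num.sqrt (cov St (projXt - pi2 St *: projW2) (projXt - pi2 St *: projW2)).
Proof.
move=> St_W2; rewrite /A_rx St_W2 mulr1 sqrtr_sqr -piW_eq -{2}[pi1 St]trmxK cov_mxsub.
have -> : lincomb (@eW n) ((pi1 St)^T 0) = piW by apply: eq_lincomb => // j; rewrite mxE.
by [].
Qed.

Definition resYlong := 'e_(ext (oY n)) - lproj St (@eXWW n) (ext (oY n)).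

Lemma lproj_Y_XW1W2 : exists (w : 'I_n -> R) (c : R),
  lproj St (@eXWW n) (ext (oY n))
  = beta_long St *: 'e_(ext (oX n)) + lincomb (@eW n) w + c *: 'e_(eW2 n).
Proof.
eexists; eexists; rewrite /lproj lincomb_recl lincomb_recr /= addrA eXWW0 eXWW_max.
by congr (_ + _ + _); apply: eq_lincomb => j //=; rewrite eXWW_widen.
Qed.

Lemma resYlong_orthW j : cov St resYlong 'e_(eW j) = 0.
Proof. by rewrite -eXWW_widen; apply: lproj_orth (@eXWW_inj n). Qed.

Lemma resYlong_resXt : cov St resYlong resXt = 0.
Proof.
rewrite -[resXt](addrK projXt) -delta_eXt covBr projXt_lincomb.
by rewrite (cov_lincomb_eq0 _ resYlong_orthW) subr0 -eXWW0; apply: lproj_orth (@eXWW_inj n).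
Qed.

Lemma resYlong_resW2 : cov St resYlong resW2 = 0.
Proof.
rewrite covBr (cov_lincomb_eq0 _ resYlong_orthW) subr0 -eXWW_max.
exact: lproj_orth (@eXWW_inj n).
Qed.

Lemma beta_long_eq :
  beta_long St * (vX S * vW2 - cXW2 ^+ 2) = cXY S * vW2 - cYW2 * cXW2.
Proof.
have [w [c proj_eq]] := lproj_Y_XW1W2.
move: resYlong_resXt resYlong_resW2; rewrite /resYlong proj_eq !covBl !covDl !covZl.
rewrite cov_eXt_resXt cov_eYt_resXt cov_eW2_resXt cov_span_resXt.
rewrite cov_eXt_resW2 cov_eYt_resW2 cov_eW2_resW2 cov_span_resW2 !addr0.
move=> /eqP; rewrite subr_eq0 => /eqP -> /eqP; rewrite subr_eq0 => /eqP ->.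
ring.
Qed.

Lemma fwl_denom_gt0 : 0 < vX S * vW2 - cXW2 ^+ 2.
Proof.
rewrite subr_gt0 /vX -(cov_liftv St_ext) -/resXt.
apply: (cauchy_schwarz_lt St_pd (j := eW2 n)); first exact: liftv_coord_eW2.
  by rewrite lproj_resid_coord ?oner_eq0 //; apply: eW_neq_eW2.
by rewrite (cov_liftv St_ext) vX_gt0.
Qed.

Lemma breakdown_lower r : St (eW2 n) (eW2 n) = 1 -> 0 <= cXY S -> 0 <= r ->
  A_rx St r -> beta_long St <= 0 -> cXY S ^+ 2 <= r ^+ 2 * (vPX S * vY S + cXY S ^+ 2).
Proof.
move=> St_W2 cXY_ge0 r_ge0 /(A_rxE _ St_W2) A_rx_r beta_le0.
set g := Num.sqrt (vPX S); set s := Num.sqrt vPW2.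
have sd_le : Num.sqrt (cov St (projXt - pi2 St *: projW2) (projXt - pi2 St *: projW2))
             <= g + `|pi2 St| * s.
  apply: le_trans (sd_triangle St_pd _ _) _.
  rewrite (cov_liftv St_ext) covNl covNr opprK covZl covZr mulrA -expr2.
  by rewrite sqrtrM ?sqr_ge0 // sqrtr_sqr.
have g_sq : g ^+ 2 = vPX S by rewrite sqr_sqrtr // cov_ge0.
rewrite -g_sq.
apply: (breakdown_lower_arith (s := s) (t := `|pi2 St|) (vW2 := vW2) (cXW2 := cXW2)
         (cYW2 := cYW2));
  rewrite ?sqrtr_ge0 ?normr_ge0 ?vW2_gt0 //.
- by rewrite (vW2_eq St_W2) sqr_sqrtr // cov_ge0.
- by rewrite -pi2_eq exprMn real_normK ?num_real.
- exact: le_trans A_rx_r (ler_wpM2l r_ge0 sd_le).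
- rewrite -subr_le0 -beta_long_eq.
  by apply: mulr_le0_ge0 => //; apply: ltW; apply: fwl_denom_gt0.
- by rewrite /vY -(cov_liftv St_ext) cauchy_schwarz.
Qed.

End Extended.

Section Construction.
Variables (R : realType) (n : nat) (S : 'M[R]_n.+2).
Hypothesis S_pd : posdef S.
Variables (c1 c2 c3 v : R).

Definition confounder := c1 *: projX S + c2 *: resX S + c3 *: resY S.

Lemma cov_resX_confounder : cov S (resX S) confounder = c2 * vX S + c3 * cXY S.
Proof. by rewrite /confounder 2!covDr !covZr covC // (projX_resX S_pd) mulr0 add0r. Qed.

Lemma cov_resY_confounder : cov S (resY S) confounder = c2 * cXY S + c3 * vY S.
Proof.
rewrite /confounder 2!covDr !covZr covC // (projX_resY S_pd) mulr0 add0r.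
by rewrite (covC S_pd (resY S)).
Qed.

Lemma cov_projX_confounder : cov S (projX S) confounder = c1 * vPX S.
Proof.
by rewrite /confounder 2!covDr !covZr (projX_resX S_pd) (projX_resY S_pd) !mulr0 !addr0.
Qed.

Lemma cov_confounder : cov S confounder confounder =
  c1 ^+ 2 * vPX S + (c2 ^+ 2 * vX S + 2 * c2 * c3 * cXY S + c3 ^+ 2 * vY S).
Proof.
rewrite {1}/confounder 2!covDl !covZl cov_projX_confounder.
by rewrite cov_resX_confounder cov_resY_confounder; ring.
Qed.

Hypothesis v_gt0 : 0 < v.
Hypothesis confounder_var : cov S confounder confounder + v = 1.

(* Sconf is the covariance matrix of (Y, X, W1, W2) when
   W2 = confounder . (Y, X, W1) + an independent noise of variance v. *)
Definition confmx : 'M[R]_(n.+3, n.+2) :=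
  \matrix_(i, j) if unlift (eW2 n) i is Some i' then (i' == j)%:R else confounder 0 j.
Definition Sconf := confmx *m S *m confmx^T + v *: delta_mx (eW2 n) (eW2 n).

Lemma cov_Sconf u w :
  cov Sconf u w = cov S (u *m confmx) (w *m confmx) + v * (u 0 (eW2 n) * w 0 (eW2 n)).
Proof.
rewrite /cov /Sconf mulmxDr mulmxDl mxE trmx_mul !mulmxA; congr (_ + _).
rewrite -scalemxAr -scalemxAl mxE; congr (_ * _).
by rewrite -(mul_delta_mx (0 : 'I_1)) mulmxA -colE -mulmxA -rowE mxE big_ord1 !mxE.
Qed.

Lemma delta_confmx k :
  'e_k *m confmx = if unlift (eW2 n) k is Some i then 'e_i else confounder.
Proof.
rewrite -rowE; apply/rowP => j; rewrite !mxE.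
by case: (unlift _ k) => [i|]; rewrite ?mxE ?eqxx //= eq_sym.
Qed.

Lemma delta_ext_confmx i : 'e_(ext i) *m confmx = 'e_i.
Proof. by rewrite delta_confmx ext_lift liftK. Qed.

Lemma delta_eW2_confmx : 'e_(eW2 n) *m confmx = confounder.
Proof. by rewrite delta_confmx unlift_none. Qed.

Lemma liftv_confmx x : liftv x *m confmx = x.
Proof.
rewrite [x in LHS]row_lincomb liftv_lincomb [RHS]row_lincomb /lincomb mulmx_suml.
by apply: eq_bigr => a _; rewrite -scalemxAl delta_ext_confmx.
Qed.

Lemma confmx_coord (u : 'rV[R]_n.+3) i :
  (u *m confmx) 0 i = u 0 (lift (eW2 n) i) + u 0 (eW2 n) * confounder 0 i.
Proof.
have widen_lift : forall j, widen_ord (leqnSn n.+2) j = lift (eW2 n) j := @ext_lift n.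
rewrite mxE big_ord_recr /= mxE unlift_none; congr (_ + _).
rewrite (bigD1 i) //= mxE widen_lift liftK eqxx mulr1 big1 ?addr0 // => j ji.
by rewrite mxE widen_lift liftK (negbTE ji) mulr0.
Qed.

Lemma Sconf_ext i j : Sconf (ext i) (ext j) = S i j.
Proof.
rewrite -(cov_delta Sconf) cov_Sconf !delta_ext_confmx cov_delta !delta_coord.
by rewrite (negbTE (ext_neq_eW2 i)) mul0r mulr0 addr0.
Qed.

Lemma Sconf_W2 : Sconf (eW2 n) (eW2 n) = 1.
Proof. by rewrite -(cov_delta Sconf) cov_Sconf delta_eW2_confmx delta_coord eqxx !mulr1. Qed.

Lemma Sconf_pd : posdef Sconf.
Proof.
split.
  rewrite /Sconf linearD /= !trmx_mul trmxK linearZ /= trmx_delta mulmxA.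
  by case: S_pd => ->.
move=> u u_neq0; rewrite -/(cov Sconf u u) cov_Sconf.
have [uW2_0|uW2_neq0] := eqVneq (u 0 (eW2 n)) 0.
  rewrite uW2_0 mulr0 mulr0 addr0 cov_gt0 //; apply: contra_neq u_neq0 => u_conf0.
  apply/rowP => k; case: (unliftP (eW2 n) k) => [i ->|->]; last by rewrite uW2_0 mxE.
  by have := confmx_coord u i; rewrite u_conf0 uW2_0 mul0r addr0 !mxE => <-.
apply: (lt_le_trans (y := v * (u 0 (eW2 n) * u 0 (eW2 n)))).
  by rewrite mulr_gt0 // -expr2 exprn_even_gt0.
by rewrite lerDr cov_ge0.
Qed.

Lemma projW2_Sconf : projW2 Sconf = c1 *: projXt S.
Proof.
rewrite projXt_lincomb -lincombZ; apply: (lproj_unique Sconf_pd (@eW_inj n)) => j.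
rewrite lincombZ -projXt_lincomb cov_Sconf mulmxBl delta_eW2_confmx -scalemxAl.
rewrite liftv_confmx delta_ext_confmx delta_coord (negbTE (ext_neq_eW2 _)) !mulr0 addr0.
have -> : confounder - c1 *: projX S = c2 *: resX S + c3 *: resY S.
  by rewrite /confounder -[c1 *: _ + _ + _]addrA [c1 *: _ + _]addrC addrK.
by rewrite covDl !covZl resX_orthW // resY_orthW // !mulr0 addr0.
Qed.

Lemma vPW2_Sconf : vPW2 Sconf = c1 ^+ 2 * vPX S.
Proof. by rewrite /vPW2 projW2_Sconf covZl covZr (cov_liftv Sconf_ext) mulrA -expr2. Qed.

Lemma cXW2_Sconf : cXW2 S Sconf = c2 * vX S + c3 * cXY S.
Proof.
rewrite /cXW2 /resW2 covBr projW2_Sconf covZr.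
rewrite (covC Sconf_pd (resXt S) (projXt S)) (projXt_resXt S_pd Sconf_pd Sconf_ext).
rewrite mulr0 subr0 cov_Sconf liftv_confmx delta_eW2_confmx liftv_coord_eW2 mul0r mulr0.
by rewrite addr0 cov_resX_confounder.
Qed.

Lemma cYW2_Sconf : cYW2 S Sconf = c2 * cXY S + c3 * vY S.
Proof.
rewrite /cYW2 /resW2 covBr projW2_Sconf covZr.
rewrite (covC Sconf_pd (resYt S) (projXt S)) (projXt_resYt S_pd Sconf_pd Sconf_ext).
rewrite mulr0 subr0 cov_Sconf liftv_confmx delta_eW2_confmx liftv_coord_eW2 mul0r mulr0.
by rewrite addr0 cov_resY_confounder.
Qed.

Lemma pi2_Sconf : pi2 Sconf * (1 - c1 ^+ 2 * vPX S) = c2 * vX S + c3 * cXY S.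
Proof.
by rewrite -vPW2_Sconf -(vW2_eq Sconf_pd Sconf_W2) (pi2_eq S Sconf_pd) cXW2_Sconf.
Qed.

Lemma A_rx_Sconf r :
  A_rx Sconf r <-> `|pi2 Sconf| <= r * (`|1 - pi2 Sconf * c1| * Num.sqrt (vPX S)).
Proof.
apply: iff_trans (A_rxE S_pd Sconf_pd Sconf_ext r Sconf_W2) _.
have -> : projXt S - pi2 Sconf *: projW2 Sconf = (1 - pi2 Sconf * c1) *: projXt S.
  by rewrite projW2_Sconf scalerBl scale1r scalerA.
rewrite covZl covZr (cov_liftv Sconf_ext) mulrA -expr2 sqrtrM ?sqr_ge0 // sqrtr_sqr.
by [].
Qed.

End Construction.

Lemma ereal_inf_threshold (R : realType) (A : set R) (x y : R) : x < y ->
  (forall r, A r -> x <= r) -> (forall r, x < r < y -> A r) ->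
  ereal_inf [set r%:E | r in A] = x%:E.
Proof.
move=> xy A_ge A_int; apply/eqP; rewrite eq_le; apply/andP; split; last first.
  by apply: le_ereal_inf_tmp => _ [r Ar <-]; rewrite lee_fin A_ge.
apply/lee_addgt0Pr => e e_gt0; set m := Num.min (x + e) y.
have x_lt_m : x < m by rewrite lt_min xy andbT ltrDl.
have m_le : m <= x + e /\ m <= y by rewrite !ge_min !lexx orbT.
apply: ge_ereal_inf; exists ((x + m) / 2)%:E; last by rewrite lee_fin; lra.
by exists ((x + m) / 2) => //; apply: A_int; apply/andP; split; lra.
Qed.

Section Breakdown.
Variables (R : realType) (n : nat) (S : 'M[R]_n.+2).
Hypothesis S_pd : posdef S.

Lemma breakdown_upper r : 0 < vPX S -> 0 < r < 1 ->
  (1 - r ^+ 2) * cXY S ^+ 2 < r ^+ 2 * vPX S * vY S ->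
  exists b, b <= 0 /\ B_I S r 0 1 b.
Proof.
move=> vPX_gt0 r01 r_large; have /andP [r_gt0 r_lt1] := r01.
have [c2 [c3 [v [v_gt0 var_eq fwl_eq a_ge0 a_le]]]] :=
  confounder_coefs (vX_gt0 S_pd) (cXY_sq_lt S_pd) vPX_gt0 r01 r_large.
(* R_{W2~W1} = |c1| g = r, and the sign of c1 keeps 1 - pi2 c1 >= 1. *)
set g := Num.sqrt (vPX S); set c1 := - (r / g).
have g_gt0 : 0 < g by rewrite sqrtr_gt0.
have c1_sq : c1 ^+ 2 * vPX S = r ^+ 2.
  by rewrite sqrrN expr_div_n -(sqr_sqrtr (ltW vPX_gt0)) -/g divfK // sqrf_eq0 gt_eqF.
have conf_var : cov S (confounder S c1 c2 c3) (confounder S c1 c2 c3) + v = 1.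
  by rewrite cov_confounder // c1_sq.
set St := Sconf S c1 c2 c3 v; have St_pd : posdef St := Sconf_pd S_pd c1 c2 c3 v_gt0.
have St_ext := Sconf_ext S c1 c2 c3 v.
exists (beta_long St); split.
  have := beta_long_eq S_pd St_pd St_ext; have := fwl_denom_gt0 S_pd St_pd St_ext.
  rewrite vW2_eq ?Sconf_W2 // vPW2_Sconf // c1_sq cXW2_Sconf // cYW2_Sconf // -fwl_eq subrr.
  by move=> D_gt0 /eqP; rewrite mulf_eq0 (gt_eqF D_gt0) orbF => /eqP ->.
exists St; split=> //; split; first exact: Sconf_W2 conf_var.
split=> //; split; last by split=> //; apply: A_c01.
apply/(A_rx_Sconf S_pd v_gt0 conf_var); rewrite -/g.
have pi2_St := pi2_Sconf S_pd v_gt0 conf_var; rewrite c1_sq in pi2_St.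
have pi2_ge0 : 0 <= pi2 St.
  by rewrite -(pmulr_lge0 _ (_ : 0 < 1 - r ^+ 2)) ?pi2_St // subr_gt0; nra.
have c1_le0 : c1 <= 0 by rewrite oppr_le0 divr_ge0 ?ltW.
rewrite !ger0_norm //; last by rewrite subr_ge0 (le_trans (mulr_ge0_le0 _ _)).
have -> : r * ((1 - pi2 St * c1) * g) = r * g + pi2 St * r ^+ 2.
  by rewrite /c1; field; rewrite gt_eqF.
have : pi2 St * (1 - r ^+ 2) <= r * g by rewrite pi2_St.
lra.
Qed.

Lemma breakdown_ratioE : 0 < vPX S ->
  R2_Y_X_W1 S / (R2_X_W1 S / (1 - R2_X_W1 S) + R2_Y_X_W1 S)
  = cXY S ^+ 2 / (vPX S * vY S + cXY S ^+ 2).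
Proof.
move=> vPX_pos; have vX_pos := vX_gt0 S_pd; have vY_pos := vY_gt0 S_pd.
have D_pos : 0 < vPX S * vY S + cXY S ^+ 2 := ltr_wpDr (sqr_ge0 _) (mulr_gt0 vPX_pos vY_pos).
rewrite /R2_Y_X_W1 /R2_X_W1 beta_medE // resvarX // resvarY // rsqX //.
field; rewrite addrK; apply/and5P; split; apply: lt0r_neq0 => //; first exact: addr_gt0.
by rewrite (_ : _ + _ = vX S * (vPX S * vY S + cXY S ^+ 2)) ?mulr_gt0 //; ring.
Qed.

End Breakdown.

Theorem mainTheorem2 (R : realType) (n : nat) (S : 'M[R]_n.+2) :
  posdef S ->
  mxsub (@oW n) (fun _ : 'I_1 => oX n) S != 0 ->
  0 <= beta_med S ->
  rx_bp S =
  (Num.sqrt (R2_Y_X_W1 S / (R2_X_W1 S / (1 - R2_X_W1 S) + R2_Y_X_W1 S)))%:E.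
Proof.
move=> S_pd covWX_neq0 beta_med_ge0; have vPX_pos := vPX_gt0 S_pd covWX_neq0.
have cXY_ge0 : 0 <= cXY S.
  by move: beta_med_ge0; rewrite (beta_medE S_pd) pmulr_lge0 // invr_gt0 vX_gt0.
have D_pos : 0 < vPX S * vY S + cXY S ^+ 2.
  by rewrite ltr_wpDr ?sqr_ge0 // mulr_gt0 ?vY_gt0.
rewrite breakdown_ratioE //; apply: (ereal_inf_threshold (y := 1)).
- by rewrite -sqrtr1 ltr_sqrt // ltr_pdivrMr // mul1r ltrDr mulr_gt0 ?vY_gt0.
- move=> r [r_ge0 [b [b_le0 [St [St_ext [St_W2 [St_pd [A_rx_r [_ beta_b]]]]]]]]].
  have := breakdown_lower S_pd St_pd St_ext St_W2 cXY_ge0 r_ge0 A_rx_r.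
  rewrite beta_b -ler_pdivrMr // => /(_ b_le0) /ler_wsqrtr.
  by rewrite sqrtr_sqr ger0_norm.
- move=> r /andP [bp_lt_r r_lt1]; have r_pos := le_lt_trans (sqrtr_ge0 _) bp_lt_r.
  split; first exact: ltW.
  apply: breakdown_upper; rewrite ?r_pos //.
  move: bp_lt_r; rewrite -[r in _ < r]ger0_norm ?ltW // -sqrtr_sqr ltr_sqrt ?exprn_gt0 //.
  by rewrite ltr_pdivrMr //; lra.
Qed.
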